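(* Let $Z\subset\mathbb R^n$ be convex, for some $n\in\mathbb N$, and let $y\in Z$. The weight function $t_y:Z\to[0,1]$ is continuous (with respect to the Euclidean topology restricted to $Z$) if and only if $y\in Z\setminus\partial Z$.
   Context: For $x,y\in Z$ write $x\leq_C y$ if $y=tx+(1-t)z$ for some $z\in Z$ and $0<t\leq 1$; the boundary $\partial Z$ is the set of $y\in Z$ such that some $x\in Z$ has $x\not\leq_C y$. The weight function is $t_y(x)=\sup\{0\leq t<1 : \frac{y-tx}{1-t}\in Z\}$. *)

From HB Require Import structures.
From mathcomp Require Import all_boot all_order all_algebra.
From mathcomp Require Import all_classical all_reals all_analysis.
Set Implicit Arguments. Unset Strict Implicit. Unset Printing Implicit Defensive.
Import Order.TTheory GRing.Theory Num.Theory.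
Import numFieldNormedType.Exports.
Local Open Scope classical_set_scope.
Local Open Scope ring_scope.

Definition leC (R : realType) (n : nat) (Z : set 'rV[R]_n) (x y : 'rV[R]_n) : Prop :=
  exists z, Z z /\ exists t : R, 0 < t <= 1 /\ y = t *: x + (1 - t) *: z.

Definition boundaryC (R : realType) (n : nat) (Z : set 'rV[R]_n) : set 'rV[R]_n :=
  [set y | Z y /\ exists x, Z x /\ ~ leC Z x y].

Definition weight (R : realType) (n : nat) (Z : set 'rV[R]_n) (y x : 'rV[R]_n) : R :=
  sup [set t : R | 0 <= t < 1 /\ Z ((1 - t)^-1 *: (y - t *: x))].

From HB Require Import structures.
From mathcomp Require Import all_boot all_order all_algebra.
From mathcomp Require Import all_classical all_reals all_analysis.
From mathcomp Require Import ring lra.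
Import Order.TTheory GRing.Theory Num.Theory.
Import numFieldNormedType.Exports.
Local Open Scope classical_set_scope.
Local Open Scope ring_scope.
Set Implicit Arguments.
Unset Strict Implicit.
Unset Printing Implicit Defensive.

(* If y is not a boundary point, every segment [x, y] with x in Z can be
   extended beyond y inside Z.  Applying this to finitely many directions
   spanning the affine hull of Z gives a radius r such that
   y + c (a - b) lies in Z whenever a, b are in Z and |c| |a - b| <= r.
   Such a radius lets a witness t_a for t_y(a) be transported to any
   t_b < t_a as a witness for t_y(b) when b is close to a, which yields
   continuity of t_y.  Conversely, if x is not <=_C y then t_y vanishes on
   the half-open segment (y, x] while t_y(y) = 1, so t_y is discontinuous
   at y. *)

Lemma sub1r_neq0 (R : numDomainType) (t : R) : t < 1 -> 1 - t != 0.
Proof. by move=> t1; rewrite gt_eqF // subr_gt0. Qed.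

Section convex_combinations.
Variables (R : realFieldType) (V : lmodType R) (Z : set V).
Hypothesis cZ : convex_set Z.

Lemma convex_setW a b l : Z a -> Z b -> 0 <= l -> l <= 1 ->
  Z (l *: a + (1 - l) *: b).
Proof.
move=> Za Zb l0 l1.
by have := cZ (Itv01 l0 l1) (mem_set Za) (mem_set Zb); rewrite inE.
Qed.

Lemma scaler_addl_comb (y u w : V) l :
  l *: (y + u) + (1 - l) *: (y + w) = y + (l *: u + (1 - l) *: w).
Proof. by rewrite !scalerDr addrACA -scalerDl subrKC scale1r. Qed.

Lemma convex_set_add_sum (y : V) (I : eqType) (s : seq I)
    (p : I -> R) (v : I -> V) :
  Z y -> (forall i, 0 <= p i) -> (forall i, Z (y + v i)) ->
  \sum_(i <- s) p i <= 1 -> Z (y + \sum_(i <- s) p i *: v i).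
Proof.
move=> Zy + Zv; elim: s p => [|i s IH] p p0; first by rewrite !big_nil addr0.
rewrite !big_cons => hs.
have [Pe|Pn] := eqVneq (\sum_(j <- s) p j) 0.
  have -> : \sum_(j <- s) p j *: v j = 0.
    apply: big1_seq => j js; move/eqP: Pe; rewrite psumr_eq0 //.
    by move/allP/(_ j js)/eqP ->; rewrite scale0r.
  have pi1 : p i <= 1 by move: hs; rewrite Pe addr0.
  rewrite addr0 -[p i *: v i]addr0 -(scaler0 _ (1 - p i)) -scaler_addl_comb.
  by rewrite addr0; apply: convex_setW.
have Ppos : 0 < \sum_(j <- s) p j by rewrite lt_neqAle eq_sym Pn sumr_ge0.
have pi1 : p i < 1 by move: hs Ppos; lra.
pose q j := p j / (1 - p i).
have q0 j : 0 <= q j by rewrite /q divr_ge0 // subr_ge0 ltW.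
have qs : \sum_(j <- s) q j <= 1.
  by rewrite /q -mulr_suml ler_pdivrMr ?subr_gt0 // mul1r lerBrDl.
have -> : \sum_(j <- s) p j *: v j = (1 - p i) *: \sum_(j <- s) q j *: v j.
  rewrite scaler_sumr; apply: eq_bigr => j _.
  by rewrite scalerA /q mulrC divfK // sub1r_neq0.
rewrite -scaler_addl_comb.
exact: convex_setW (Zv i) (IH q q0 qs) _ (ltW pi1).
Qed.

End convex_combinations.

Lemma exists_spanning_rows (R : realType) (n : nat) (Z : set 'rV[R]_n) y :
  exists m (B : 'M[R]_(m, n)),
    (forall i, Z (y + row i B)) /\ forall x, Z x -> (x - y <= B)%MS.
Proof.
pose P k := `[< exists m (B : 'M[R]_(m, n)),
   (forall i, Z (y + row i B)) /\ \rank B = k >].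
have P0 : exists k, P k.
  by exists 0%N; apply/asboolP; exists 0%N, 0; split; [case | exact: mxrank0].
have Pub k : P k -> (k <= n)%N.
  by case/asboolP=> m [B [_ <-]]; exact: rank_leq_col.
case: (ex_maxnP P0 Pub) => k /asboolP[m [B [HB rB]]] kmax.
exists m, B; split => // x Zx; apply: contraT => xB.
pose B' := col_mx B (x - y).
have HB' i : Z (y + row i B').
  rewrite -(splitK i); case: (fintype.split i) => j /=; first by rewrite rowKu.
  by rewrite rowKd row_id addrC subrK.
have sBB' : (B <= B')%MS by rewrite -addsmxE addsmxSl.
have ltBB' : (\rank B < \rank B')%N.
  rewrite (ltn_leqif (mxrank_leqif_sup sBB')).
  by apply: contra xB => /(submx_trans _); apply; rewrite -addsmxE addsmxSr.
have /kmax : P (\rank B') by apply/asboolP; exists (m + 1)%N, B'.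
by rewrite -rB leqNgt ltBB'.
Qed.

Lemma mx_norm_ge_coef (R : realFieldType) m n (A : 'M[R]_(m, n)) i j :
  `|A i j| <= `|A|.
Proof.
change (`|A i j| <= mx_norm A); rewrite mx_normrE; apply/bigmax_geP; right.
by exists (i, j).
Qed.

Section weight.
Variables (R : realType) (n : nat) (Z : set 'rV[R]_n) (y : 'rV[R]_n).
Hypotheses (cZ : convex_set Z) (Zy : Z y).

Definition weight_set x :=
  [set t : R | 0 <= t < 1 /\ Z ((1 - t)^-1 *: (y - t *: x))].

Lemma weight_set0 x : weight_set x 0.
Proof. by split; rewrite ?lexx ?ltr01 // subr0 invr1 scale0r subr0 scale1r. Qed.

Lemma weight_set_ubound x : has_ubound (weight_set x).
Proof. by exists 1 => t [/andP[_ /ltW]]. Qed.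

Lemma weight_ge0 x : 0 <= weight Z y x.
Proof. exact: ub_le_sup (weight_set_ubound x) _ (weight_set0 x). Qed.

Lemma weight_le1 x : weight Z y x <= 1.
Proof.
by apply: ge_sup => [|t [/andP[_ /ltW]]] //; exists 0; exact: weight_set0.
Qed.

Lemma weight_set_le x t : weight_set x t -> t <= weight Z y x.
Proof. exact: ub_le_sup (weight_set_ubound x) _. Qed.

Lemma weight_set_adherent x e : 0 < e ->
  exists2 t, weight_set x t & weight Z y x - e < t.
Proof.
move=> e0; apply: sup_adherent => //; split; last exact: weight_set_ubound.
by exists 0; exact: weight_set0.
Qed.

(* The point (y - tb b) / (1 - tb) is a convex combination of
   (y - ta a) / (1 - ta) and y + c (a - b). *)
Lemma weight_set_shift a b ta tb : weight_set a ta -> 0 <= tb < ta ->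
  Z (y + (ta * tb / (ta - tb)) *: (a - b)) -> weight_set b tb.
Proof.
move=> [/andP[ta0 ta1] Zta] /andP[tb0 tbta] Zc.
have [->|tbn0] := eqVneq tb 0; first exact: weight_set0.
have tbpos : 0 < tb by rewrite lt_neqAle eq_sym tbn0.
have tapos : 0 < ta by apply: lt_trans tbta.
have tb1 : tb < 1 by apply: lt_trans ta1.
split; first by rewrite tb0 tb1.
pose l := tb * (1 - ta) / (ta * (1 - tb)).
have l0 : 0 <= l by rewrite divr_ge0 // ?mulr_ge0 // ?subr_ge0 ltW.
have l1 : l <= 1.
  rewrite ler_pdivrMr ?mulr_gt0 ?subr_gt0 // mul1r.
  by rewrite !mulrBr !mulr1 mulrC lerD2r ltW.
have := convex_setW cZ Zta Zc l0 l1.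
congr Z; apply/rowP => j; rewrite !mxE /l; field.
by rewrite !sub1r_neq0 // subr_eq0 (gt_eqF tbta) (gt_eqF tapos).
Qed.

Lemma weight_set_down x t t' :
  weight_set x t -> 0 <= t' <= t -> weight_set x t'.
Proof.
move=> Sxt /andP[t'0]; rewrite le_eqVlt => /predU1P[->//|t't].
by apply: (weight_set_shift Sxt); rewrite ?t'0 ?t't // subrr scaler0 addr0.
Qed.

Lemma weight_self : weight Z y y = 1.
Proof.
apply/le_anti; rewrite weight_le1 leNgt; apply/negP => w1.
have w0 := weight_ge0 y.
pose t := (weight Z y y + 1) / 2.
suff /weight_set_le : weight_set y t by rewrite /t; lra.
split; first by apply/andP; rewrite /t; split; lra.
congr Z: Zy; apply/rowP => j; rewrite !mxE /t; field; rewrite gt_eqF //; lra.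
Qed.

(* A positive t in [weight_set] would write y as a convex combination of x,
   with positive coefficient, and a point of Z. *)
Lemma weight_not_leC x l : ~ leC Z x y -> 0 < l -> l <= 1 ->
  weight Z y (y + l *: (x - y)) = 0.
Proof.
move=> nxy l0 l1; apply/le_anti; rewrite weight_ge0 andbT.
apply: ge_sup => [|t [/andP[t0 t1] Zt]]; first by exists 0; exact: weight_set0.
rewrite leNgt; apply/negP => tpos; apply: nxy.
exists ((1 - t)^-1 *: (y - t *: (y + l *: (x - y)))); split => //.
have d0 : 0 < 1 - t + t * l by have := mulr_gt0 tpos l0; lra.
exists (t * l / (1 - t + t * l)); split.
  by rewrite divr_gt0 ?mulr_gt0 //= ler_pdivrMr // mul1r; lra.
by apply/rowP => j; rewrite !mxE; field; rewrite sub1r_neq0 // gt_eqF.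
Qed.

Lemma boundary_weight_discontinuous :
  boundaryC Z y -> ~ {within Z, continuous (weight Z y)}.
Proof.
move=> [_ [x [Zx nxy]]] /subspace_continuousP /(_ y Zy) /cvgrPdist_lt.
have half : (0 : R) < 1 / 2 by lra.
move=> /(_ _ half); rewrite near_withinE => /(@nbhs_normP R _ y) [e e0 he].
have nx := normr_ge0 (x - y).
pose l := e / (e + `|x - y|).
have l0 : 0 < l by rewrite divr_gt0 // ltr_wpDr.
have l1 : l <= 1 by rewrite ler_pdivrMr ?mul1r ?lerDl ?ltr_wpDr.
have Zxl : Z (y + l *: (x - y)).
  have := convex_setW cZ Zx Zy (ltW l0) l1.
  by congr Z; apply/rowP => j; rewrite !mxE; ring.
have yxl : ball_ Num.norm y e (y + l *: (x - y)).
  rewrite /ball_ /= opprD addrA subrr add0r normrN normrZ ger0_norm ?ltW //.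
  rewrite /l mulrAC ltr_pdivrMr ?ltr_wpDr // ltr_pM2l //.
  by rewrite [e + _]addrC ltrDl.
have := he _ yxl Zxl; rewrite /from_subspace weight_self weight_not_leC //.
by rewrite subr0 normr1; lra.
Qed.

Section interior.
Hypothesis ny : ~ boundaryC Z y.

Lemma nonboundary_extend v : Z (y + v) -> exists2 s, 0 < s & Z (y - s *: v).
Proof.
move=> Zv.
have [z [Zz [t [/andP[t0 t1] ey]]]] : leC Z (y + v) y.
  by apply: contrapT => nl; apply: ny; split => //; exists (y + v).
have [t_1|tn1] := eqVneq t 1.
  exists 1 => //; suff -> : v = 0 by rewrite scaler0 subr0.
  by apply/rowP => j; move/rowP: ey => /(_ j); rewrite !mxE t_1; lra.
have t1' : t < 1 by rewrite lt_neqAle tn1.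
exists (t / (1 - t)); first by rewrite divr_gt0 // subr_gt0.
congr Z: Zz; apply/rowP => j; move/rowP: ey => /(_ j); rewrite !mxE => e.
have -> : z 0 j = (y 0 j - t * (y 0 j + v 0 j)) / (1 - t).
  by apply/(mulIf (sub1r_neq0 t1')); rewrite divfK ?sub1r_neq0 // {1}e; ring.
by field; rewrite sub1r_neq0.
Qed.

Lemma nonboundary_extend_uniform m (v : 'I_m -> 'rV[R]_n) :
  (forall i, Z (y + v i)) ->
  exists2 sg, 0 < sg & forall i tau, `|tau| <= sg -> Z (y + tau *: v i).
Proof.
move=> Zv.
have [s s0 Zs] := fin_all_exists2 (fun i => nonboundary_extend (Zv i)).
have sum0 : 0 <= \sum_i (s i)^-1.
  by apply: sumr_ge0 => i _; rewrite invr_ge0 ltW.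
exists (1 + \sum_i (s i)^-1)^-1 => [|i tau]; first by rewrite invr_gt0 ltr_wpDr.
set sg := _^-1 => htau.
have sg1 : sg <= 1 by rewrite invf_le1 ?ltr_wpDr // lerDl.
have sgs : sg <= s i.
  rewrite -(invrK (s i)) lef_pV2 ?posrE ?invr_gt0 ?ltr_wpDr //.
  rewrite (bigD1 i) //= addrCA lerDl addr_ge0 //.
  by apply: sumr_ge0 => k _; rewrite invr_ge0 ltW.
have [tau0|tau0] := leP 0 tau.
  have tau1 : tau <= 1 by apply: le_trans sg1; rewrite -(ger0_norm tau0).
  have := convex_setW cZ (Zv i) Zy tau0 tau1.
  by congr Z; apply/rowP => j; rewrite !mxE; ring.
have l0 : 0 <= - tau / s i by rewrite divr_ge0 // ?oppr_ge0 ltW.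
have l1 : - tau / s i <= 1.
  by rewrite ler_pdivrMr // mul1r -(ltr0_norm tau0) (le_trans htau).
have := convex_setW cZ (Zs i) Zy l0 l1.
by congr Z; apply/rowP => j; rewrite !mxE; field; rewrite gt_eqF.
Qed.

(* u = c (a - b) lies in the row space of B and its coordinates u *m pinvmx B
   are O(|u|), so for small u the point y + u is a convex combination of y
   and the points y +- sg row i B. *)
Lemma nonboundary_absorbing : exists2 r, 0 < r & forall a b c, Z a -> Z b ->
  `|c| * `|a - b| <= r -> Z (y + c *: (a - b)).
Proof.
have [m [B [ZB Bspan]]] := exists_spanning_rows Z y.
have [sg sg0 Zsg] := nonboundary_extend_uniform ZB.
pose K := \sum_i \sum_j `|pinvmx B j i|.
have K0 : 0 <= K by do 2![apply: sumr_ge0 => ? _].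
exists (sg / (K + 1)) => [|a b c Za Zb hc]; first by rewrite divr_gt0 ?ltr_wpDl.
set u := c *: (a - b).
have uB : (u <= B)%MS.
  have -> : u = c *: ((a - y) + (-1) *: (b - y)).
    by congr (_ *: _); apply/rowP => j; rewrite !mxE; ring.
  by apply/scalemx_sub/addmx_sub; rewrite ?scalemx_sub ?Bspan.
set cc := u *m pinvmx B.
have ue : u = \sum_i cc 0 i *: row i B by rewrite -mulmx_sum_row mulmxKpV.
have ccK : \sum_i `|cc 0 i| <= K * `|u|.
  rewrite /K mulr_suml; apply: ler_sum => i _.
  rewrite /cc mxE mulr_suml; apply: le_trans (ler_norm_sum _ _ _) _.
  by apply: ler_sum => j _; rewrite normrM mulrC ler_wpM2l // mx_norm_ge_coef.
have ccsg : \sum_i `|cc 0 i| <= sg.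
  apply: le_trans ccK (le_trans (ler_wpM2l K0 (_ : `|u| <= sg / (K + 1))) _).
    by rewrite /u normrZ.
  by rewrite mulrCA ger_pMr // ler_pdivrMr ?ltr_wpDl // mul1r lerDl.
pose p i := `|cc 0 i| / sg.
pose v i := (if 0 <= cc 0 i then sg else - sg) *: row i B.
have p0 i : 0 <= p i by rewrite divr_ge0 // ltW.
have Zv i : Z (y + v i).
  by apply: Zsg; case: ifP => _; rewrite ?normrN ger0_norm // ltW.
have := convex_set_add_sum cZ Zy p0 Zv (_ : \sum_i p i <= 1).
rewrite -mulr_suml ler_pdivrMr // mul1r => /(_ ccsg).
congr (Z (_ + _)); rewrite ue; apply: eq_bigr => i _.
rewrite /p /v scalerA; congr (_ *: _).
case: ifP => h; first by rewrite ger0_norm // divfK // gt_eqF.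
by rewrite ltr0_norm ?ltNge ?h //; field; rewrite gt_eqF.
Qed.

Lemma weight_set_near ta tb : 0 <= tb < ta -> exists2 d, 0 < d &
  forall a b, Z a -> Z b -> `|a - b| < d -> weight_set a ta -> weight_set b tb.
Proof.
move=> /andP[tb0 tbta]; have [r r0 Zr] := nonboundary_absorbing.
pose c := ta * tb / (ta - tb).
have c0 : 0 <= c by apply: divr_ge0; [apply: mulr_ge0|]; lra.
exists (r / (c + 1)) => [|a b Za Zb ab Sa]; first by rewrite divr_gt0 ?ltr_wpDl.
apply: (weight_set_shift Sa _ (Zr _ _ _ Za Zb _)); first by rewrite tb0.
rewrite ger0_norm //; apply: le_trans (ler_wpM2l c0 (ltW ab)) _.
by rewrite mulrCA ger_pMr // ler_pdivrMr ?ltr_wpDl // mul1r lerDl.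
Qed.

Lemma weight_continuous : {within Z, continuous (weight Z y)}.
Proof.
apply/subspace_continuousP => x0 Zx0; apply/cvgrPdist_lt => e e0.
rewrite near_withinE; apply/(@nbhs_normP R _ x0); rewrite /from_subspace.
have w0 := weight_ge0 x0.
have e2 : 0 < e / 2 by lra.
have e4 : 0 < e / 4 by lra.
set w := weight Z y x0 in w0 *.
have [d1 d10 lower] : exists2 d, 0 < d & forall x, Z x -> `|x0 - x| < d ->
    w - e < weight Z y x.
  have [tb0|tbn] := leP 0 (w - e / 2); last first.
    by exists 1 => // x _ _; have := weight_ge0 x; lra.
  have [t St wt] := weight_set_adherent x0 e4.
  rewrite -/w in wt.
  case: (@weight_set_near t (w - e / 2)) => [|d d0 near].
    by rewrite tb0 /=; lra.
  by exists d => // x Zx /(near _ _ Zx0 Zx) /(_ St) /weight_set_le; lra.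
have [d2 d20 upper] : exists2 d, 0 < d & forall x, Z x -> `|x0 - x| < d ->
    weight Z y x < w + e.
  case: (@weight_set_near (w + e / 2) (w + e / 4)) => [|d d0 near].
    by apply/andP; split; lra.
  exists d => // x Zx x0x; rewrite ltNge; apply/negP => wx.
  have [t St xt] := weight_set_adherent x e2.
  have /(near _ _ Zx Zx0) : weight_set x (w + e / 2).
    by apply: (weight_set_down St); apply/andP; split; lra.
  by rewrite distrC => /(_ x0x) /weight_set_le; rewrite -/w; lra.
exists (Order.min d1 d2) => [|x /= ]; first by rewrite /= lt_min d10 d20.
rewrite lt_min => /andP[h1 h2] Zx.
by have := lower x Zx h1; have := upper x Zx h2; rewrite ltr_norml; lra.
Qed.

End interior.
End weight.

Theorem proposition9 (R : realType) (n : nat) (Z : set 'rV[R]_n) (y : 'rV[R]_n) :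
  @convex_set R 'rV[R]_n Z -> Z y ->
  ({within Z, continuous (weight Z y)} <-> ~ boundaryC Z y).
Proof.
move=> cZ Zy; split; last exact: weight_continuous.
by move=> ct /(boundary_weight_discontinuous cZ Zy).
Qed.
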